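(* Let $Seq$ be a sequent of $\mathrm{L}^{\mathrm{R}}$. Then (1) $tr_{\mathrm{R}}(Seq)\in tr'_{\mathrm{R}}(Seq)$; (2) if $H\to T\in tr'_{\mathrm{R}}(Seq)$, then $\mathrm{HL}\vdash tr_{\mathrm{R}}(Seq)$ if and only if $\mathrm{HL}\vdash H\to T$.
   Context: $\mathrm{L}^{\mathrm{R}}$: types built from primitive types by $\backslash,/,\cdot$ and unary ${}^{\mathrm{R}}$; a sequent is $A_1,\dots,A_n\to C$ with $n\ge1$. Hypergraphs: given labels with arities, a graph is $G=\langle V,E,att,lab,ext\rangle$, $att:E\to V^\circledast$ (distinct nodes), $type(lab(e))=|att(e)|$, $ext\in V^\circledast$; $type(G)=|ext|$; isomorphic graphs identified. Handle $a^\bullet$: one edge labeled $a$ attached to $v_1\dots v_n$, all external. String graph $w^\bullet$ of $w=a_1\dots a_n$: nodes $v_0..v_n$, edges $e_i$ with $att(e_i)=v_{i-1}v_i$, $lab(e_i)=a_i$, $ext=v_0v_n$. Generalized string graph $(a_1^{\delta_1}\dots a_n^{\delta_n})^\bullet$ ($\delta_i\in\{0,1\}$): same but $att(e_i)=v_iv_{i-1}$ when $\delta_i=1$. Replacement $G[e/H]$: remove $e$, insert a disjoint copy of $H$, fuse $i$-th external node of $H$ with $i$-th attachment node of $e$; relabeling $G[e:=a]$. $\mathrm{HL}$: primitive types with arities (infinitely many of each); symbol $\$$ of any arity. Types: primitives; $N\div D$ ($D$ has exactly one $\$$-edge $d_0$, others labeled by types, $type(N)=type(D)$, $type(N\div D)=type_D(d_0)$);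 $\times(M)$ ($M$ type-labeled, $type(\times(M))=type(M)$). Graph sequent $H\to A$ with $type(H)=type(A)$. Axioms $p^\bullet\to p$. Rules: $(\div\to)$: for $N\div D$, $E_D=\{d_0,\dots,d_k\}$, $e\in E_H$ labeled $N$: from $H\to A$, $H_i\to lab(d_i)$ infer $H[e/D][d_0:=N\div D][d_1/H_1,\dots,d_k/H_k]\to A$; $(\to\div)$: from $D[d_0/F]\to N$ infer $F\to N\div D$; $(\times\to)$: $e\in E_G$ labeled $\times(F)$, from $G[e/F]\to A$ infer $G\to A$; $(\to\times)$: $E_M=\{m_1,\dots,m_l\}$, from $H_i\to lab(m_i)$ infer $M[m_1/H_1,\dots,m_l/H_l]\to\times(M)$. Translations: $tr_{\mathrm{R}}(p)=p$ (primitive of type 2), $tr_{\mathrm{R}}(A/B)=tr_{\mathrm{R}}(A)\div(\$\,tr_{\mathrm{R}}(B))^\bullet$, $tr_{\mathrm{R}}(B\backslash A)=tr_{\mathrm{R}}(A)\div(tr_{\mathrm{R}}(B)\,\$)^\bullet$, $tr_{\mathrm{R}}(A\cdot B)=\times((tr_{\mathrm{R}}(A)\,tr_{\mathrm{R}}(B))^\bullet)$, $tr_{\mathrm{R}}(A^{\mathrm{R}})=\times(M_A)$ where $M_A$ has nodes $v_1,v_2$, $ext=v_1v_2$, and one edge labeled $tr_{\mathrm{R}}(A)$ with $att=v_2v_1$; $tr_{\mathrm{R}}(A_1,\dots,A_n\to A)=(tr_{\mathrm{R}}(A_1)\dots tr_{\mathrm{R}}(A_n))^\bullet\to tr_{\mathrm{R}}(A)$.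 With $[A]^0=A$ and $[A]^1=A^{\mathrm{R}}$, for $Seq=A_1,\dots,A_n\to C$ the set $tr'_{\mathrm{R}}(Seq)$ consists of all graph sequents $(tr_{\mathrm{R}}(B_1)^{\delta_1}\dots tr_{\mathrm{R}}(B_n)^{\delta_n})^\bullet\to tr_{\mathrm{R}}(C)$ for all $\delta_i\in\{0,1\}$ and types $B_i$ with $A_i=[B_i]^{\delta_i}$. *)

From Stdlib Require Import List Arith Bool.
Import ListNotations.

(* Hypergraphs: nodes are 0 .. gnv-1; an edge is (label, attachment);   *)
(* ext is the sequence of external nodes.                               *)
Record graph (L : Type) : Type := mkGraph {
  gnv : nat;
  gedges : list (L * list nat);
  gext : list nat }.
Arguments mkGraph {L} _ _ _.
Arguments gnv {L} _.
Arguments gedges {L} _.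
Arguments gext {L} _.

(* HL types.  HPrim x a : primitive type named x of arity a.
   Edge labels of graphs inside types are [option HLtype]; [None] is $. *)
Inductive HLtype : Type :=
| HPrim : nat -> nat -> HLtype
| HDiv : HLtype -> graph (option HLtype) -> HLtype
| HTimes : graph (option HLtype) -> HLtype.

Definition hgraph := graph (option HLtype).
Definition edge := (option HLtype * list nat)%type.

Definition is_dollar (e : edge) : bool :=
  match fst e with None => true | Some _ => false end.

Definition count_dollar (G : hgraph) : nat :=
  length (filter is_dollar (gedges G)).

Definition arity (A : HLtype) : nat :=
  match A with
  | HPrim _ a => a
  | HDiv _ D => match find is_dollar (gedges D) with
                | Some (_, att) => length att
                | None => 0 end
  | HTimes M => length (gext M)
  end.

Definition wf_graph_with (wt : HLtype -> Prop) (G : hgraph) : Prop :=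
  (forall v, In v (gext G) -> v < gnv G) /\ NoDup (gext G) /\
  (fix go (es : list edge) : Prop :=
     match es with
     | nil => True
     | (lab, att) :: es' =>
        ((forall v, In v att -> v < gnv G) /\ NoDup att /\
         match lab with
         | None => True
         | Some T => wt T /\ arity T = length att
         end) /\ go es'
     end) (gedges G).

Fixpoint wf_type (A : HLtype) : Prop :=
  match A with
  | HPrim _ _ => True
  | HDiv N D => wf_type N /\ count_dollar D = 1 /\ arity N = length (gext D) /\
      (forall v, In v (gext D) -> v < gnv D) /\ NoDup (gext D) /\
      (fix go (es : list edge) : Prop :=
         match es with
         | nil => True
         | (lab, att) :: es' =>
            ((forall v, In v att -> v < gnv D) /\ NoDup att /\
             match lab with
             | None => True
             | Some T => wf_type T /\ arity T = length att
             end) /\ go es'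
         end) (gedges D)
  | HTimes M => count_dollar M = 0 /\
      (forall v, In v (gext M) -> v < gnv M) /\ NoDup (gext M) /\
      (fix go (es : list edge) : Prop :=
         match es with
         | nil => True
         | (lab, att) :: es' =>
            ((forall v, In v att -> v < gnv M) /\ NoDup att /\
             match lab with
             | None => True
             | Some T => wf_type T /\ arity T = length att
             end) /\ go es'
         end) (gedges M)
  end.

Definition wf_graph (G : hgraph) : Prop := wf_graph_with wf_type G.

Definition wf_seq (H : hgraph) (A : HLtype) : Prop :=
  wf_graph H /\ count_dollar H = 0 /\ wf_type A /\ arity A = length (gext H).

Definition elab (G : hgraph) (i : nat) : option HLtype :=
  match nth_error (gedges G) i with Some (l, _) => l | None => None end.
Definition eatt (G : hgraph) (i : nat) : list nat :=
  match nth_error (gedges G) i with Some (_, a) => a | None => nil end.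

Fixpoint find_index (v : nat) (l : list nat) : option nat :=
  match l with
  | nil => None
  | x :: l' => if Nat.eqb v x then Some 0
               else option_map S (find_index v l')
  end.

Definition memb (u : nat) (l : list nat) : bool := existsb (Nat.eqb u) l.

Definition rank (ext : list nat) (v : nat) : nat :=
  length (filter (fun u => negb (memb u ext)) (seq 0 v)).

Definition n_internal (H : hgraph) : nat := gnv H - length (gext H).

(* node map of a copy of H inserted in place of an edge with attachment
   [att]; internal nodes are numbered from [off] on; the i-th external
   node of H is fused with the i-th attachment node *)
Definition emb (H : hgraph) (att : list nat) (off : nat) (v : nat) : nat :=
  match find_index v (gext H) with
  | Some i => nth i att 0
  | None => off + rank (gext H) v
  end.

(* simultaneous replacement of every edge i with rs i = Some H_i *)
Fixpoint subst_edges (rs : nat -> option hgraph) (i n : nat) (es : list edge)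
  : nat * list edge :=
  match es with
  | nil => (n, nil)
  | (lab, att) :: es' =>
     match rs i with
     | Some H =>
        let r := subst_edges rs (S i) (n + n_internal H) es' in
        (fst r, map (fun e => (fst e, map (emb H att n) (snd e))) (gedges H)
                 ++ snd r)
     | None =>
        let r := subst_edges rs (S i) n es' in
        (fst r, (lab, att) :: snd r)
     end
  end.

Definition subst (G : hgraph) (rs : nat -> option hgraph) : hgraph :=
  let r := subst_edges rs 0 (gnv G) (gedges G) in
  mkGraph (fst r) (snd r) (gext G).

Definition single (e : nat) (H : hgraph) : nat -> option hgraph :=
  fun i => if Nat.eqb i e then Some H else None.
Definition repl (G : hgraph) (e : nat) (H : hgraph) : hgraph :=
  subst G (single e H).

Fixpoint relab_edges (k : nat) (a : option HLtype) (es : list edge) : list edge :=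
  match es, k with
  | nil, _ => nil
  | (_, att) :: es', 0 => (a, att) :: es'
  | x :: es', S k' => x :: relab_edges k' a es'
  end.
Definition relabel (G : hgraph) (e : nat) (a : option HLtype) : hgraph :=
  mkGraph (gnv G) (relab_edges e a (gedges G)) (gext G).

(* Isomorphism of graphs, with labels compared up to the induced
   equivalence of types (isomorphic graphs are identified, also inside
   types). *)
Inductive teq : HLtype -> HLtype -> Prop :=
| teq_prim : forall x a, teq (HPrim x a) (HPrim x a)
| teq_div : forall N N' D D', teq N N' -> giso D D' -> teq (HDiv N D) (HDiv N' D')
| teq_times : forall M M', giso M M' -> teq (HTimes M) (HTimes M')
with giso : hgraph -> hgraph -> Prop :=
| giso_intro : forall (G G' : hgraph) (f s : nat -> nat),
    gnv G' = gnv G ->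
    length (gedges G') = length (gedges G) ->
    (forall x, x < gnv G -> f x < gnv G) ->
    (forall x y, x < gnv G -> y < gnv G -> f x = f y -> x = y) ->
    (forall i, i < length (gedges G) -> s i < length (gedges G)) ->
    (forall i j, i < length (gedges G) -> j < length (gedges G) -> s i = s j -> i = j) ->
    (forall i, i < length (gedges G) -> eatt G' (s i) = map f (eatt G i)) ->
    gext G' = map f (gext G) ->
    (forall i, i < length (gedges G) -> (elab G i = None <-> elab G' (s i) = None)) ->
    (forall i x y, i < length (gedges G) -> elab G i = Some x ->
                   elab G' (s i) = Some y -> teq x y) ->
    giso G G'.

Definition handle (x a : nat) : hgraph :=
  mkGraph a [(Some (HPrim x a), seq 0 a)] (seq 0 a).

Inductive hl_deriv : hgraph -> HLtype -> Prop :=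
| hl_ax : forall x a, wf_seq (handle x a) (HPrim x a) ->
    hl_deriv (handle x a) (HPrim x a)
| hl_div_l : forall (H : hgraph) (A N : HLtype) (D : hgraph) (e d0 : nat)
                    (Hs : nat -> hgraph),
    hl_deriv H A ->
    e < length (gedges H) -> elab H e = Some N ->
    d0 < length (gedges D) -> elab D d0 = None ->
    (forall i, i < length (gedges D) -> i <> d0 ->
       exists T, elab D i = Some T /\ hl_deriv (Hs i) T) ->
    let D' := subst (relabel D d0 (Some (HDiv N D)))
                    (fun i => if Nat.eqb i d0 then None else Some (Hs i)) in
    wf_seq (repl H e D') A ->
    hl_deriv (repl H e D') A
| hl_div_r : forall (F D : hgraph) (N : HLtype) (d0 : nat),
    d0 < length (gedges D) -> elab D d0 = None ->
    hl_deriv (repl D d0 F) N ->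
    wf_seq F (HDiv N D) ->
    hl_deriv F (HDiv N D)
| hl_times_l : forall (G F : hgraph) (A : HLtype) (e : nat),
    e < length (gedges G) -> elab G e = Some (HTimes F) ->
    hl_deriv (repl G e F) A ->
    wf_seq G A ->
    hl_deriv G A
| hl_times_r : forall (M : hgraph) (Hs : nat -> hgraph),
    (forall i, i < length (gedges M) ->
       exists T, elab M i = Some T /\ hl_deriv (Hs i) T) ->
    wf_seq (subst M (fun i => Some (Hs i))) (HTimes M) ->
    hl_deriv (subst M (fun i => Some (Hs i))) (HTimes M)
| hl_iso : forall (G G' : hgraph) (A A' : HLtype),
    hl_deriv G A -> giso G G' -> teq A A' -> wf_seq G' A' ->
    hl_deriv G' A'.

Inductive ltype : Type :=
| LPrim : nat -> ltype
| LLdiv : ltype -> ltype -> ltype    (* LLdiv B A = B \ A *)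
| LRdiv : ltype -> ltype -> ltype    (* LRdiv A B = A / B *)
| LProd : ltype -> ltype -> ltype
| LRev : ltype -> ltype.

Fixpoint trR (A : ltype) : HLtype :=
  match A with
  | LPrim x => HPrim x 2
  | LRdiv A B => HDiv (trR A) (mkGraph 3 [(None, [0;1]); (Some (trR B), [1;2])] [0;2])
  | LLdiv B A => HDiv (trR A) (mkGraph 3 [(Some (trR B), [0;1]); (None, [1;2])] [0;2])
  | LProd A B => HTimes (mkGraph 3 [(Some (trR A), [0;1]); (Some (trR B), [1;2])] [0;2])
  | LRev A => HTimes (mkGraph 2 [(Some (trR A), [1;0])] [0;1])
  end.

Fixpoint gs_edges (k : nat) (l : list (HLtype * bool)) : list edge :=
  match l with
  | nil => nil
  | (T, d) :: l' => (Some T, if d then [S k; k] else [k; S k]) :: gs_edges (S k) l'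
  end.
Definition gen_string (l : list (HLtype * bool)) : hgraph :=
  mkGraph (S (length l)) (gs_edges 0 l) [0; length l].

Definition trR_ant (Gamma : list ltype) : hgraph :=
  gen_string (map (fun A => (trR A, false)) Gamma).

Definition bracket (B : ltype) (d : bool) : ltype := if d then LRev B else B.

(* (H -> T) ∈ tr'_R(Gamma -> C), membership up to isomorphism *)
Definition in_trR' (Gamma : list ltype) (C : ltype) (H : hgraph) (T : HLtype) : Prop :=
  exists l : list (ltype * bool),
    map (fun p => bracket (fst p) (snd p)) l = Gamma /\
    giso (gen_string (map (fun p => (trR (fst p), snd p)) l)) H /\
    teq (trR C) T.

From Stdlib Require Import List Arith Lia Permutation FinFun.
Import ListNotations.

(* Part (1) is witnessed by taking every δ_i = 0.  For part (2), a member of tr'_R(Seq) is, up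
   to isomorphism, the generalized string graph whose i-th edge carries tr_R(B_i), reversed when
   δ_i = 1.  It arises from tr_R(Seq) by flipping, for each δ_i = 1, the edge labelled
   tr_R(B_i^R) = ×(M_{B_i}) into the reversed edge labelled tr_R(B_i); this is exactly what rule
   (×→) does to that edge, so derivability of the flipped graph implies that of tr_R(Seq).
   Conversely (×→) is invertible on such edges: by induction on derivations a flip commutes with
   every rule of HL, and for the isomorphism rule the flipped edge is pulled back along the
   isomorphism to an edge labelled ×(M) with M ≅ M_B, which can be flipped as well.  Finally
   derivability is invariant under isomorphism of sequents, isomorphism being symmetric on
   well-formed graphs. *)

(** * Flipping an edge labelled by a reversal *)

(* [M] is the graph M_B of tr_R(B^R) with [T] = tr_R(B), up to renaming its two nodes. *)
Definition reversal_graph (M : hgraph) (T : HLtype) : Prop :=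
  gnv M = 2 /\
  exists x y, gedges M = [(Some T, [x; y])] /\ gext M = [y; x] /\ x < 2 /\ y < 2 /\ x <> y.

Definition flip_edge (e e' : edge) : Prop :=
  exists M T u v, e = (Some (HTimes M), [u; v]) /\ reversal_graph M T /\ e' = (Some T, [v; u]).

Definition flip_step (es es' : list edge) : Prop :=
  exists pre e e' post, es = pre ++ e :: post /\ es' = pre ++ e' :: post /\ flip_edge e e'.

Definition flip_graph (G G' : hgraph) : Prop :=
  gnv G' = gnv G /\ gext G' = gext G /\ flip_step (gedges G) (gedges G').

Definition map_att (g : nat -> nat) (e : edge) : edge := (fst e, map g (snd e)).

Lemma flip_edge_map_att g e e' : flip_edge e e' -> flip_edge (map_att g e) (map_att g e').
Proof.
  intros (M & T & u & v & -> & HM & ->). exists M, T, (g u), (g v). auto.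
Qed.

Lemma flip_step_nil es : ~ flip_step [] es.
Proof. intros ([|] & x & x' & post & Heq & _); discriminate. Qed.

Lemma flip_step_app_tail l l' tl : flip_step l l' -> flip_step (l ++ tl) (l' ++ tl).
Proof.
  intros (pre & e & e' & post & -> & -> & H). exists pre, e, e', (post ++ tl).
  rewrite <- !app_assoc. auto.
Qed.

Lemma flip_step_app_head hd l l' : flip_step l l' -> flip_step (hd ++ l) (hd ++ l').
Proof.
  intros (pre & e & e' & post & -> & -> & H). exists (hd ++ pre), e, e', post.
  rewrite <- !app_assoc. auto.
Qed.

Lemma flip_step_map g l l' :
  flip_step l l' -> flip_step (map (map_att g) l) (map (map_att g) l').
Proof.
  intros (pre & e & e' & post & -> & -> & H).
  exists (map (map_att g) pre), (map_att g e), (map_att g e'), (map (map_att g) post).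
  rewrite !map_app. auto using flip_edge_map_att.
Qed.

Lemma flip_step_cons_inv x l es :
  flip_step (x :: l) es ->
  (exists x', flip_edge x x' /\ es = x' :: l) \/ (exists l', flip_step l l' /\ es = x :: l').
Proof.
  intros ([|y pre] & e & e' & post & Heq & -> & H); simpl in Heq; injection Heq as -> ->.
  - left. eauto.
  - right. exists (pre ++ e' :: post). split; [exists pre, e, e', post|]; auto.
Qed.

Lemma flip_step_app_inv l1 l2 es :
  flip_step (l1 ++ l2) es ->
  (exists l1', flip_step l1 l1' /\ es = l1' ++ l2) \/
  (exists l2', flip_step l2 l2' /\ es = l1 ++ l2').
Proof.
  intros (pre & e & e' & post & Heq & -> & H).
  apply app_eq_app in Heq as [m [[-> Hm] | [-> ->]]].
  - destruct m as [|x m]; simpl in Hm.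
    + subst l2. rewrite app_nil_r. right. exists (e' :: post).
      split; [exists [], e, e', post|]; auto.
    + injection Hm as -> ->. left. exists (pre ++ e' :: m).
      split; [exists pre, x, e', m|rewrite <- app_assoc]; auto.
  - right. exists (m ++ e' :: post).
    split; [exists m, e, e', post|rewrite <- app_assoc]; auto.
Qed.

Lemma flip_step_map_inv g l es :
  flip_step (map (map_att g) l) es -> exists l', flip_step l l' /\ es = map (map_att g) l'.
Proof.
  intros (pre & e & e' & post & Heq & -> & M & T & u & v & -> & HM & ->).
  apply map_eq_app in Heq as (l1 & l2 & -> & <- & Hl2).
  apply map_eq_cons in Hl2 as ([lab [|a1 [|a2 [|a3 att]]]] & tl & -> & Hh & <-);
    injection Hh; intros; subst; try discriminate.
  exists (l1 ++ (Some T, [a2; a1]) :: tl). rewrite map_app. split; [|reflexivity].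
  exists l1, (Some (HTimes M), [a1; a2]), (Some T, [a2; a1]), tl.
  repeat split; [exists M, T, a1, a2; auto].
Qed.

Lemma nth_error_edges G i :
  i < length (gedges G) -> nth_error (gedges G) i = Some (elab G i, eatt G i).
Proof.
  intros Hi. unfold elab, eatt.
  destruct (nth_error (gedges G) i) as [[l a]|] eqn:E; auto.
  apply nth_error_Some in Hi. contradiction.
Qed.

Lemma Forall_edges_iff G (P : edge -> Prop) :
  Forall P (gedges G) <-> forall i, i < length (gedges G) -> P (elab G i, eatt G i).
Proof.
  rewrite Forall_forall. split.
  - intros H i Hi. apply H, nth_error_In with i, nth_error_edges, Hi.
  - unfold edge in *. intros H e He. apply In_nth_error in He as [i Hi].
    assert (Hl : i < length (gedges G)) by (apply nth_error_Some; rewrite Hi; discriminate).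
    rewrite nth_error_edges in Hi by exact Hl. injection Hi as <-. auto.
Qed.

Lemma elab_eatt_mid G (pre post : list edge) x :
  gedges G = pre ++ x :: post -> elab G (length pre) = fst x /\ eatt G (length pre) = snd x.
Proof.
  intros E. unfold elab, eatt. rewrite E, nth_error_app2, Nat.sub_diag by lia.
  destruct x. auto.
Qed.

Lemma elab_eatt_other G G' (pre post : list edge) x y i :
  gedges G = pre ++ x :: post -> gedges G' = pre ++ y :: post -> i <> length pre ->
  elab G' i = elab G i /\ eatt G' i = eatt G i.
Proof.
  intros E E' Hi. unfold elab, eatt. rewrite E, E'.
  destruct (Nat.lt_ge_cases i (length pre)).
  - rewrite !nth_error_app1 by lia. auto.
  - rewrite !nth_error_app2 by lia. destruct (i - length pre) eqn:Hd; [lia|]. auto.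
Qed.

Lemma length_relab_edges k a es : length (relab_edges k a es) = length es.
Proof. revert k. induction es as [|[l t] es IH]; intros [|k]; simpl; auto. Qed.

Lemma nth_error_relab_edges k a es :
  nth_error (relab_edges k a es) k = option_map (fun x => (a, snd x)) (nth_error es k).
Proof. revert k. induction es as [|[l t] es IH]; intros [|k]; simpl; auto. Qed.

Lemma subst_edges_app rs es1 : forall i n es2,
  subst_edges rs i n (es1 ++ es2) =
  (fst (subst_edges rs (i + length es1) (fst (subst_edges rs i n es1)) es2),
   snd (subst_edges rs i n es1) ++
   snd (subst_edges rs (i + length es1) (fst (subst_edges rs i n es1)) es2)).
Proof.
  induction es1 as [|[lab att] es1 IH]; intros i n es2; simpl.
  - rewrite Nat.add_0_r. destruct (subst_edges rs i n es2); reflexivity.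
  - replace (i + S (length es1)) with (S i + length es1) by lia.
    destruct (rs i); simpl; rewrite IH; simpl; rewrite ?app_assoc; reflexivity.
Qed.

Lemma subst_edges_ext rs rs' es : forall i n,
  (forall k, i <= k < i + length es -> rs k = rs' k) ->
  subst_edges rs i n es = subst_edges rs' i n es.
Proof.
  induction es as [|[lab att] es IH]; intros i n Hk; simpl in *; auto.
  rewrite <- (Hk i) by lia.
  destruct (rs i); rewrite IH; auto; intros k Hk'; apply Hk; lia.
Qed.

Lemma subst_edges_none rs es : forall i n,
  (forall k, i <= k < i + length es -> rs k = None) ->
  subst_edges rs i n es = (n, es).
Proof.
  induction es as [|[lab att] es IH]; intros i n Hk; simpl in *; auto.
  rewrite (Hk i) by lia. rewrite IH; auto. intros k Hk'. apply Hk. lia.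
Qed.

Lemma subst_eq G rs G' :
  subst_edges rs 0 (gnv G) (gedges G) = (gnv G', gedges G') -> gext G' = gext G ->
  subst G rs = G'.
Proof. destruct G'. unfold subst. simpl. intros -> ->. reflexivity. Qed.

Lemma subst_ext G rs rs' : (forall k, rs k = rs' k) -> subst G rs = subst G rs'.
Proof. intros E. unfold subst. rewrite (subst_edges_ext rs rs'); auto. Qed.

Definition set_repl (rs : nat -> option hgraph) (j : nat) (H : hgraph) : nat -> option hgraph :=
  fun k => if Nat.eqb k j then Some H else rs k.

Lemma set_repl_eq rs j H : set_repl rs j H j = Some H.
Proof. unfold set_repl. rewrite Nat.eqb_refl. reflexivity. Qed.

Lemma set_repl_neq rs j H k : k <> j -> set_repl rs j H k = rs k.
Proof. unfold set_repl. intros Hk. apply Nat.eqb_neq in Hk. rewrite Hk. reflexivity. Qed.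

Lemma set_repl_single e H H' k : set_repl (single e H) e H' k = single e H' k.
Proof. unfold set_repl, single. destruct (Nat.eqb k e); reflexivity. Qed.

Lemma subst_edges_flip_inv rs : forall es i n es2,
  flip_step (snd (subst_edges rs i n es)) es2 ->
  (exists pre e e' post, es = pre ++ e :: post /\ flip_edge e e' /\ rs (i + length pre) = None /\
     subst_edges rs i n (pre ++ e' :: post) = (fst (subst_edges rs i n es), es2)) \/
  (exists j H H', i <= j < i + length es /\ rs j = Some H /\ flip_graph H H' /\
     subst_edges (set_repl rs j H') i n es = (fst (subst_edges rs i n es), es2)).
Proof.
  induction es as [|[lab att] es IH]; intros i n es2 Hs; simpl in Hs.
  { contradiction (flip_step_nil _ Hs). }
  destruct (rs i) as [H|] eqn:Ei; simpl in Hs;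
    [apply flip_step_app_inv in Hs as [[l1' [Hst ->]] | [l2' [Hst ->]]]
    |apply flip_step_cons_inv in Hs as [[x' [Hfl ->]] | [l2' [Hst ->]]]].
  2,4: destruct (IH _ _ l2' Hst) as
         [(pre & e & e' & post & -> & Hfl & Hn & Heq) | (j & H0 & H' & Hj & Hrs & HFG & Heq)];
       [left; exists ((lab, att) :: pre), e, e', post; simpl;
        rewrite <- Nat.add_succ_comm, Ei, Heq; auto
       |right; exists j, H0, H'; split; [simpl; lia|]; do 2 (split; [assumption|]);
        simpl; rewrite set_repl_neq, Ei, Heq by lia; reflexivity].
  - apply flip_step_map_inv in Hst as [hes' [Hst ->]].
    right. exists i, H, (mkGraph (gnv H) hes' (gext H)). simpl.
    repeat split; auto; try lia. rewrite set_repl_eq, (subst_edges_ext _ rs).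
    + rewrite Ei. reflexivity.
    + intros k Hk. apply set_repl_neq. lia.
  - left. exists [], (lab, att), x', es. destruct x'. simpl. rewrite Nat.add_0_r, Ei. auto.
Qed.

Lemma subst_edges_flip_kept rs i n pre e e' post :
  flip_edge e e' -> rs (i + length pre) = None ->
  fst (subst_edges rs i n (pre ++ e' :: post)) = fst (subst_edges rs i n (pre ++ e :: post)) /\
  flip_step (snd (subst_edges rs i n (pre ++ e :: post)))
            (snd (subst_edges rs i n (pre ++ e' :: post))).
Proof.
  intros Hfl Hn. rewrite !subst_edges_app. destruct e, e'. simpl. rewrite Hn. simpl.
  split; auto. apply flip_step_app_head.
  eexists [], _, _, _. split; [reflexivity|split; [reflexivity|exact Hfl]].
Qed.

Lemma subst_edges_flip_inserted rs es : forall i n j H H',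
  i <= j < i + length es -> rs j = Some H -> flip_graph H H' ->
  fst (subst_edges (set_repl rs j H') i n es) = fst (subst_edges rs i n es) /\
  flip_step (snd (subst_edges rs i n es)) (snd (subst_edges (set_repl rs j H') i n es)).
Proof.
  induction es as [|[lab att] es IH]; intros i n j H H' Hj E HFG; simpl in Hj |- *.
  { lia. }
  destruct (Nat.eqb_spec i j).
  - subst j. destruct HFG as (Hv & He & Hst). rewrite E, set_repl_eq. simpl.
    replace (n_internal H') with (n_internal H) by (unfold n_internal; rewrite Hv, He; auto).
    replace (emb H' att n) with (emb H att n) by (unfold emb; rewrite He; auto).
    rewrite (subst_edges_ext (set_repl rs i H') rs).
    + split; auto. apply flip_step_app_tail. exact (flip_step_map _ _ _ Hst).
    + intros k Hk. apply set_repl_neq. lia.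
  - rewrite set_repl_neq by auto. destruct (rs i) as [H0|]; simpl.
    + destruct (IH (S i) (n + n_internal H0) j H H') as [A B]; auto; try lia.
      split; [exact A|]. apply flip_step_app_head, B.
    + destruct (IH (S i) n j H H') as [A B]; auto; try lia.
      split; [exact A|]. apply (flip_step_app_head [_]), B.
Qed.

Lemma subst_flip_cases G rs G' :
  flip_graph (subst G rs) G' ->
  (exists pre x x' post, gedges G = pre ++ x :: post /\ flip_edge x x' /\
     rs (length pre) = None /\ G' = subst (mkGraph (gnv G) (pre ++ x' :: post) (gext G)) rs) \/
  (exists j H H', j < length (gedges G) /\ rs j = Some H /\ flip_graph H H' /\
     G' = subst G (set_repl rs j H')).
Proof.
  intros (Hv & Hx & Hst). unfold subst in Hv, Hx, Hst. simpl in Hv, Hx, Hst.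
  apply subst_edges_flip_inv in Hst. unfold edge in *.
  destruct Hst as
    [(pre & x & x' & post & E & Hfl & Hn & Heq) | (j & H & H' & Hj & Hrs & HFG & Heq)].
  - left. exists pre, x, x', post. do 3 (split; [assumption|]).
    symmetry. apply subst_eq; auto. cbn [gnv gedges]. rewrite Heq, Hv. reflexivity.
  - right. exists j, H, H'. split; [lia|]. do 2 (split; [assumption|]).
    symmetry. apply subst_eq; auto. rewrite Heq, Hv. reflexivity.
Qed.

Lemma subst_flip_kept G rs (pre post : list edge) x x' :
  gedges G = pre ++ x :: post -> flip_edge x x' -> rs (length pre) = None ->
  flip_graph (subst G rs) (subst (mkGraph (gnv G) (pre ++ x' :: post) (gext G)) rs).
Proof.
  intros E Hfl Hn. unfold subst. simpl. rewrite E.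
  destruct (subst_edges_flip_kept rs 0 (gnv G) pre x x' post Hfl Hn) as [Hv Hst].
  repeat split; auto.
Qed.

Lemma subst_flip_inserted G rs j H H' :
  j < length (gedges G) -> rs j = Some H -> flip_graph H H' ->
  flip_graph (subst G rs) (subst G (set_repl rs j H')).
Proof.
  intros Hj E HFG. unfold subst. simpl.
  assert (Hj' : 0 <= j < 0 + length (gedges G)) by lia.
  destruct (subst_edges_flip_inserted rs _ 0 (gnv G) j H H' Hj' E HFG) as [Hv Hst].
  repeat split; auto.
Qed.

Lemma repl_reversal_graph G (pre post : list edge) M T u v :
  gedges G = pre ++ (Some (HTimes M), [u; v]) :: post -> reversal_graph M T ->
  repl G (length pre) M = mkGraph (gnv G) (pre ++ (Some T, [v; u]) :: post) (gext G).
Proof.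
  intros E (HM2 & x & y & HMe & HMx & Hx & Hy & Hxy).
  assert (Hhere : single (length pre) M (length pre) = Some M).
  { unfold single. rewrite Nat.eqb_refl. reflexivity. }
  assert (Helse : forall k, k <> length pre -> single (length pre) M k = None).
  { intros k Hk. unfold single. apply Nat.eqb_neq in Hk. rewrite Hk. reflexivity. }
  unfold repl, subst. rewrite E, subst_edges_app, (subst_edges_none _ pre)
    by (intros k Hk; apply Helse; lia).
  simpl. rewrite Hhere, (subst_edges_none _ post) by (intros k Hk; apply Helse; lia).
  unfold n_internal, emb. rewrite HM2, HMe, HMx. simpl.
  rewrite Nat.eqb_refl, !Nat.add_0_r. destruct (Nat.eqb_spec x y); [lia|].
  rewrite Nat.eqb_refl. reflexivity.
Qed.

Definition edge_ok (wt : HLtype -> Prop) (n : nat) (e : edge) : Prop :=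
  (forall v, In v (snd e) -> v < n) /\ NoDup (snd e) /\
  match fst e with None => True | Some T => wt T /\ arity T = length (snd e) end.

Lemma wf_edges_iff (wt : HLtype -> Prop) n es :
  (fix go (es : list edge) : Prop :=
     match es with
     | nil => True
     | (lab, att) :: es' =>
        ((forall v, In v att -> v < n) /\ NoDup att /\
         match lab with
         | None => True
         | Some T => wt T /\ arity T = length att
         end) /\ go es'
     end) es <-> Forall (edge_ok wt n) es.
Proof.
  induction es as [|[lab att] es IH].
  - split; auto.
  - rewrite Forall_cons_iff, <- IH. reflexivity.
Qed.

Lemma wf_graph_iff G :
  wf_graph G <-> (forall v, In v (gext G) -> v < gnv G) /\ NoDup (gext G) /\
                 Forall (edge_ok wf_type (gnv G)) (gedges G).
Proof. unfold wf_graph, wf_graph_with. rewrite wf_edges_iff. reflexivity. Qed.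

Lemma wf_type_div N D :
  wf_type (HDiv N D) <->
  wf_type N /\ count_dollar D = 1 /\ arity N = length (gext D) /\ wf_graph D.
Proof. rewrite wf_graph_iff. simpl. rewrite wf_edges_iff. reflexivity. Qed.

Lemma wf_type_times M : wf_type (HTimes M) <-> count_dollar M = 0 /\ wf_graph M.
Proof. rewrite wf_graph_iff. simpl. rewrite wf_edges_iff. reflexivity. Qed.

Lemma hl_deriv_wf G A : hl_deriv G A -> wf_seq G A.
Proof. intros d. destruct d; auto. Qed.

Lemma NoDup_pair (a b : nat) : a <> b -> NoDup [a; b].
Proof. intros H. repeat constructor; simpl; intuition. Qed.

Lemma edge_ok_flip n e e' : flip_edge e e' -> edge_ok wf_type n e -> edge_ok wf_type n e'.
Proof.
  intros (M & T & u & v & -> & (_ & x & y & HMe & _) & ->) (Hr & Hnd & Hlab).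
  simpl in *. destruct Hlab as [HwM _].
  apply wf_type_times, proj2, wf_graph_iff in HwM as (_ & _ & HMes).
  rewrite HMe in HMes. inversion HMes as [|? ? (_ & _ & HT) _]; subst.
  split; [|split].
  - intros w [<-|[<-|[]]]; apply Hr; simpl; auto.
  - inversion Hnd; subst. apply NoDup_pair. simpl in *. intuition.
  - exact HT.
Qed.

Lemma wf_seq_flip G G' A : flip_graph G G' -> wf_seq G A -> wf_seq G' A.
Proof.
  intros (Hv & He & pre & e & e' & post & E & E' & Hfl) (Hw & Hc & HA & Har).
  assert (Hfl' := Hfl). destruct Hfl' as (M & T & u & v & -> & _ & ->).
  apply wf_graph_iff in Hw as (Hext & Hnd & Hes).
  rewrite E, Forall_app, Forall_cons_iff in Hes.
  unfold wf_seq, count_dollar in *. rewrite wf_graph_iff, Hv, He, E'.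
  rewrite E in Hc. rewrite filter_app in *. simpl in *.
  rewrite Forall_app, Forall_cons_iff.
  intuition. eapply edge_ok_flip; eauto.
Qed.

(** * Isomorphism *)

Lemma giso_refl_of_labels G : (forall i x, elab G i = Some x -> teq x x) -> giso G G.
Proof.
  intros H. apply (giso_intro G G (fun x => x) (fun i => i)); auto.
  - intros. rewrite map_id. auto.
  - rewrite map_id. auto.
  - intros. tauto.
  - intros i x y _ H1 H2. rewrite H1 in H2. injection H2 as <-. eauto.
Qed.

Definition label_teq_refl (e : edge) : Prop :=
  match fst e with Some T => teq T T | None => True end.

Lemma elab_teq_refl G :
  Forall label_teq_refl (gedges G) -> forall i x, elab G i = Some x -> teq x x.
Proof.
  intros HF i x Hx. unfold elab in Hx.
  destruct (nth_error (gedges G) i) as [[l a]|] eqn:E; [|discriminate].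
  apply nth_error_In, (proj1 (Forall_forall _ _) HF) in E. unfold label_teq_refl in E.
  simpl in E. subst. exact E.
Qed.

Fixpoint teq_refl (A : HLtype) : teq A A :=
  let fix labels_refl (es : list edge) : Forall label_teq_refl es :=
    match es as es0 return Forall label_teq_refl es0 with
    | nil => Forall_nil _
    | (Some T, a) :: es' =>
        @Forall_cons _ label_teq_refl (Some T, a) es' (teq_refl T) (labels_refl es')
    | (None, a) :: es' => @Forall_cons _ label_teq_refl (None, a) es' I (labels_refl es')
    end in
  match A with
  | HPrim x a => teq_prim x a
  | HDiv N D =>
      teq_div N N D D (teq_refl N)
        (giso_refl_of_labels D (elab_teq_refl D (labels_refl (gedges D))))
  | HTimes M =>
      teq_times M M (giso_refl_of_labels M (elab_teq_refl M (labels_refl (gedges M))))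
  end.

Lemma giso_refl G : giso G G.
Proof. apply giso_refl_of_labels. intros. apply teq_refl. Qed.

Lemma length_filter_indices {X} (p : X -> bool) (l : list X) d :
  length (filter p l) = length (filter (fun i => p (nth i l d)) (seq 0 (length l))).
Proof.
  induction l as [|x l IH]; simpl; auto.
  rewrite <- seq_shift. simpl. rewrite filter_map_swap.
  destruct (p x); simpl; rewrite length_map, IH; reflexivity.
Qed.

Lemma count_dollar_indices G :
  count_dollar G =
  length (filter (fun i => is_dollar (elab G i, eatt G i)) (seq 0 (length (gedges G)))).
Proof.
  unfold count_dollar. rewrite (length_filter_indices is_dollar _ (None, [])). f_equal.
  apply filter_ext_in. intros i Hi. apply in_seq in Hi.
  rewrite (nth_error_nth _ _ _ (nth_error_edges G i ltac:(lia))). reflexivity.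
Qed.

Lemma Permutation_filter_length {X} (p : X -> bool) l l' :
  Permutation l l' -> length (filter p l) = length (filter p l').
Proof.
  induction 1; simpl; auto.
  - destruct (p x); simpl; auto.
  - destruct (p x), (p y); simpl; auto.
  - congruence.
Qed.

Lemma Permutation_map_seq n s :
  bFun n s -> bInjective n s -> Permutation (map s (seq 0 n)) (seq 0 n).
Proof.
  intros Hr Hi. apply NoDup_Permutation.
  - apply Injective_map_NoDup_in; [|apply seq_NoDup].
    intros x y Hx Hy. apply in_seq in Hx, Hy. apply Hi; lia.
  - apply seq_NoDup.
  - intros y. rewrite in_map_iff, in_seq. split.
    + intros (x & <- & Hx). apply in_seq in Hx. specialize (Hr x). lia.
    + intros Hy. destruct (proj1 (bInjective_bSurjective Hr) Hi y) as (x & Hx & <-); [lia|].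
      exists x. rewrite in_seq. split; auto; lia.
Qed.

Lemma count_dollar_giso G G' s :
  length (gedges G') = length (gedges G) ->
  bFun (length (gedges G)) s -> bInjective (length (gedges G)) s ->
  (forall i, i < length (gedges G) -> (elab G i = None <-> elab G' (s i) = None)) ->
  count_dollar G' = count_dollar G.
Proof.
  intros Hl Hr Hi Hlab. rewrite !count_dollar_indices, Hl.
  rewrite <- (Permutation_filter_length _ _ _ (Permutation_map_seq _ s Hr Hi)).
  rewrite filter_map_swap, length_map. f_equal.
  apply filter_ext_in. intros i Hin. apply in_seq in Hin.
  specialize (Hlab i ltac:(lia)). unfold is_dollar. simpl.
  destruct (elab G i), (elab G' (s i)); intuition discriminate.
Qed.

Lemma dollar_edge_unique G i i' :
  count_dollar G = 1 -> i < length (gedges G) -> i' < length (gedges G) ->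
  elab G i = None -> elab G i' = None -> i = i'.
Proof.
  intros Hc Hi Hi' E E'. destruct (Nat.eq_dec i i') as [|Hne]; auto. exfalso.
  rewrite count_dollar_indices in Hc.
  assert (Hle : length [i; i'] <=
    length (filter (fun i => is_dollar (elab G i, eatt G i)) (seq 0 (length (gedges G))))).
  { apply NoDup_incl_length; [apply NoDup_pair, Hne|].
    intros x [<-|[<-|[]]]; apply filter_In; rewrite in_seq; unfold is_dollar; simpl.
    - rewrite E. split; auto; lia.
    - rewrite E'. split; auto; lia. }
  simpl in Hle. lia.
Qed.

(* [arity (HDiv N D)] reduces to [dollar_type D]. *)
Definition dollar_type (G : hgraph) : nat :=
  match find is_dollar (gedges G) with Some (_, att) => length att | None => 0 end.

Lemma dollar_type_spec G :
  count_dollar G = 1 ->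
  exists i, i < length (gedges G) /\ elab G i = None /\ dollar_type G = length (eatt G i).
Proof.
  intros Hc. unfold dollar_type.
  destruct (find is_dollar (gedges G)) as [[o a]|] eqn:E.
  - apply find_some in E as [Hin Hd]. apply In_nth_error in Hin as [i Hi].
    assert (Hl : i < length (gedges G)) by (apply nth_error_Some; unfold edge in *; congruence).
    rewrite nth_error_edges in Hi by exact Hl. injection Hi as <- <-.
    exists i. destruct (elab G i); [discriminate|auto].
  - exfalso. unfold count_dollar in Hc.
    destruct (filter is_dollar (gedges G)) as [|x r] eqn:F; [discriminate|].
    assert (Hx : In x (filter is_dollar (gedges G))) by (rewrite F; left; auto).
    apply filter_In in Hx as [Hx Hd]. rewrite (find_none _ _ E x Hx) in Hd. discriminate.
Qed.

Lemma dollar_type_giso G G' f s :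
  count_dollar G = 1 -> count_dollar G' = 1 -> length (gedges G') = length (gedges G) ->
  bFun (length (gedges G)) s -> bInjective (length (gedges G)) s ->
  (forall i, i < length (gedges G) -> eatt G' (s i) = map f (eatt G i)) ->
  (forall i, i < length (gedges G) -> (elab G i = None <-> elab G' (s i) = None)) ->
  dollar_type G' = dollar_type G.
Proof.
  intros Hc Hc' Hl Hsr Hsi Hatt Hlab.
  destruct (dollar_type_spec G Hc) as (i0 & Hi0 & E0 & ->).
  destruct (dollar_type_spec G' Hc') as (j & Hj & Ej & ->). rewrite Hl in Hj.
  destruct (proj1 (bInjective_bSurjective Hsr) Hsi j Hj) as (i & Hi & <-).
  assert (i = i0) as -> by (apply (dollar_edge_unique G); auto; apply Hlab; auto).
  rewrite Hatt, length_map; auto.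
Qed.

Scheme teq_min := Minimality for teq Sort Prop
  with giso_min := Minimality for giso Sort Prop.
Combined Scheme teq_giso_min from teq_min, giso_min.

Lemma iso_wf :
  (forall A A', teq A A' -> wf_type A -> wf_type A' /\ arity A' = arity A) /\
  (forall G G', giso G G' -> wf_graph G ->
     wf_graph G' /\ count_dollar G' = count_dollar G /\ length (gext G') = length (gext G) /\
     (count_dollar G = 1 -> dollar_type G' = dollar_type G)).
Proof.
  apply teq_giso_min.
  - auto.
  - intros N N' D D' _ IHN _ IHD Hw. apply wf_type_div in Hw as (HN & Hc & Ha & HD).
    destruct (IHN HN) as [HN' Ha']. destruct (IHD HD) as (HD' & Hc' & Hl & Hdt).
    split; [|exact (Hdt Hc)].
    apply wf_type_div. split; [exact HN'|split; [lia|split; [lia|exact HD']]].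
  - intros M M' _ IH Hw. apply wf_type_times in Hw as (Hc & HM).
    destruct (IH HM) as (HM' & Hc' & Hl & _).
    split; [|exact Hl]. apply wf_type_times. split; [lia|exact HM'].
  - intros G G' f s Hv Hl Hfr Hfi Hsr Hsi Hatt Hext Hlab _ IH Hw.
    assert (Hcnt : count_dollar G' = count_dollar G) by (eapply count_dollar_giso; eauto).
    split; [|split; [exact Hcnt|split]].
    + apply wf_graph_iff in Hw as (Her & Hend & Hes). rewrite Forall_edges_iff in Hes.
      apply wf_graph_iff. rewrite Hext, Hv. split; [|split].
      * intros v Hv'. apply in_map_iff in Hv' as (w & <- & Hw). auto.
      * apply Injective_map_NoDup_in; auto.
      * apply Forall_edges_iff. intros j Hj. rewrite Hl in Hj.
        destruct (proj1 (bInjective_bSurjective Hsr) Hsi j Hj) as (i & Hi & <-).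
        destruct (Hes i Hi) as (Har & Hand & Halab). simpl in *.
        rewrite Hatt by exact Hi. split; [|split].
        -- intros v Hv'. apply in_map_iff in Hv' as (w & <- & Hw). auto.
        -- apply Injective_map_NoDup_in; auto.
        -- simpl. destruct (elab G' (s i)) as [y|] eqn:Ey; auto.
           destruct (elab G i) as [x|] eqn:Ex.
           ++ destruct Halab as [Hx Hax]. destruct (IH i x y Hi Ex Ey Hx) as [Hy Hay].
              rewrite length_map. split; congruence.
           ++ apply Hlab in Ex; congruence.
    + rewrite Hext, length_map. reflexivity.
    + intros Hc. eapply dollar_type_giso; eauto. congruence.
Qed.

Lemma teq_wf_type A A' : teq A A' -> wf_type A -> wf_type A' /\ arity A' = arity A.
Proof. apply iso_wf. Qed.

Lemma giso_wf_graph G G' :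
  giso G G' -> wf_graph G ->
  wf_graph G' /\ count_dollar G' = count_dollar G /\ length (gext G') = length (gext G).
Proof. intros Hiso Hw. destruct (proj2 iso_wf G G' Hiso Hw) as (? & ? & ? & _). auto. Qed.

Lemma bBijective_inverse n f :
  bFun n f -> bInjective n f ->
  exists g, bFun n g /\ bInjective n g /\
    (forall x, x < n -> g (f x) = x) /\ (forall y, y < n -> f (g y) = y).
Proof.
  intros Hr Hi.
  destruct (bSurjective_bBijective Hr (proj1 (bInjective_bSurjective Hr) Hi)) as (g & Hg & Hgf).
  exists g. repeat split; auto; try apply Hgf; auto.
  intros x y Hx Hy E. rewrite <- (proj2 (Hgf x Hx)), <- (proj2 (Hgf y Hy)), E. reflexivity.
Qed.

Lemma iso_sym :
  (forall A A', teq A A' -> wf_type A -> teq A' A) /\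
  (forall G G', giso G G' -> wf_graph G -> giso G' G).
Proof.
  apply teq_giso_min.
  - intros. constructor.
  - intros N N' D D' _ IHN _ IHD Hw. apply wf_type_div in Hw as (HN & _ & _ & HD).
    constructor; auto.
  - intros M M' _ IH Hw. apply wf_type_times in Hw as (_ & HM). constructor; auto.
  - intros G G' f s Hv Hl Hfr Hfi Hsr Hsi Hatt Hext Hlab _ IH Hw.
    apply wf_graph_iff in Hw as (Her & _ & Hes). rewrite Forall_edges_iff in Hes.
    destruct (bBijective_inverse _ f Hfr Hfi) as (g & Hgr & Hgi & Hgf & Hfg).
    destruct (bBijective_inverse _ s Hsr Hsi) as (t & Htr & Hti & Hts & Hst).
    assert (Hmap : forall l, (forall v, In v l -> v < gnv G) -> map g (map f l) = l).
    { intros l Hlt. rewrite map_map. rewrite <- (map_id l) at 2. apply map_ext_in. auto. }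
    apply (giso_intro G' G g t); rewrite ?Hv, ?Hl; auto.
    + intros j Hj. rewrite <- (Hst j Hj) at 2. rewrite Hatt by auto.
      symmetry. apply Hmap, (Hes _ (Htr j Hj)).
    + rewrite Hext. symmetry. apply Hmap, Her.
    + intros j Hj. rewrite <- (Hst j Hj) at 1. symmetry. apply Hlab, Htr, Hj.
    + intros j x y Hj Ex Ey. rewrite <- (Hst j Hj) in Ex.
      destruct (Hes _ (Htr j Hj)) as (_ & _ & Hwy). simpl in Hwy. rewrite Ey in Hwy.
      exact (IH (t j) y x (Htr j Hj) Ey Ex (proj1 Hwy)).
Qed.

Lemma teq_sym A A' : teq A A' -> wf_type A -> teq A' A.
Proof. apply iso_sym. Qed.

Lemma giso_sym G G' : giso G G' -> wf_graph G -> giso G' G.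
Proof. apply iso_sym. Qed.

Lemma hl_deriv_iso_iff G A G' A' :
  wf_seq G A -> giso G G' -> teq A A' -> (hl_deriv G A <-> hl_deriv G' A').
Proof.
  intros (WG & CG & WA & AG) Hiso Hteq.
  destruct (teq_wf_type _ _ Hteq WA) as [WA' AA'].
  destruct (giso_wf_graph _ _ Hiso WG) as (WG' & CG' & LG').
  split; intros d.
  - apply hl_iso with G A; auto.
    split; [exact WG'|split; [lia|split; [exact WA'|lia]]].
  - apply hl_iso with G' A'; auto using giso_sym, teq_sym. split; auto.
Qed.

Lemma reversal_graph_giso M0 M T :
  giso M0 M -> wf_graph M0 -> reversal_graph M T -> exists T0, reversal_graph M0 T0 /\ teq T0 T.
Proof.
  intros Hiso Hw (HM2 & x & y & HMe & HMx & Hx & Hy & Hxy).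
  destruct Hiso as [M0 M f s Hv Hl _ Hfi Hsr _ Hatt Hext Hlab Hteq].
  rewrite HMe in Hl. simpl in Hl.
  destruct (gedges M0) as [|[l0 a0] [|e1 es]] eqn:E0; simpl in Hl; try discriminate.
  assert (Hs0 : s 0 = 0) by (specialize (Hsr 0); simpl in Hsr; lia).
  specialize (Hlab 0 Nat.lt_0_1). specialize (Hatt 0 Nat.lt_0_1). specialize (Hteq 0).
  rewrite Hs0 in Hlab, Hatt, Hteq. unfold elab, eatt in *. rewrite HMe, E0 in *. simpl in *.
  destruct l0 as [T0|]; [|destruct Hlab as [Hc _]; discriminate (Hc eq_refl)].
  specialize (Hteq T0 T Nat.lt_0_1 eq_refl eq_refl).
  destruct a0 as [|x0 [|y0 [|z a0]]]; simpl in Hatt; try discriminate. injection Hatt as Hfx Hfy.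
  rewrite HMx in Hext.
  destruct (gext M0) as [|p [|q [|r ex]]] eqn:Ex; simpl in Hext; try discriminate.
  injection Hext as Hfp Hfq.
  apply wf_graph_iff in Hw. rewrite E0, Ex in Hw. destruct Hw as (Her & _ & Hes).
  inversion Hes as [|? ? (Har & _) _]. simpl in Har.
  assert (HM02 : gnv M0 = 2) by lia. rewrite HM02 in Hfi, Har, Her.
  assert (x0 < 2 /\ y0 < 2) as [Hx0 Hy0] by (split; apply Har; simpl; auto).
  assert (p < 2 /\ q < 2) as [Hp Hq] by (split; apply Her; simpl; auto).
  assert (p = y0) as -> by (apply Hfi; auto; congruence).
  assert (q = x0) as -> by (apply Hfi; auto; congruence).
  exists T0. split; auto. split; auto. exists x0, y0.
  repeat split; auto. intros <-. apply Hxy. congruence.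
Qed.

Section EdgeIsomorphism.

Variables (G G2 : hgraph) (f s : nat -> nat).
Hypotheses
  (Hv : gnv G2 = gnv G)
  (Hl : length (gedges G2) = length (gedges G))
  (Hfr : bFun (gnv G) f)
  (Hfi : bInjective (gnv G) f)
  (Hsr : bFun (length (gedges G)) s)
  (Hsi : bInjective (length (gedges G)) s)
  (Hatt : forall i, i < length (gedges G) -> eatt G2 (s i) = map f (eatt G i))
  (Hext : gext G2 = map f (gext G))
  (Hlab : forall i, i < length (gedges G) -> (elab G i = None <-> elab G2 (s i) = None))
  (Hteq : forall i x y, i < length (gedges G) ->
            elab G i = Some x -> elab G2 (s i) = Some y -> teq x y).

Lemma giso_reversal_edge_preimage (pre post : list edge) M T u v :
  wf_graph G -> gedges G2 = pre ++ (Some (HTimes M), [u; v]) :: post -> reversal_graph M T ->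
  exists (pre0 post0 : list edge) M0 T0 u0 v0,
    gedges G = pre0 ++ (Some (HTimes M0), [u0; v0]) :: post0 /\ s (length pre0) = length pre /\
    reversal_graph M0 T0 /\ teq T0 T /\ f u0 = u /\ f v0 = v.
Proof.
  intros HwG E2 HM.
  assert (Hk : length pre < length (gedges G)).
  { rewrite <- Hl, E2, length_app. simpl. lia. }
  destruct (proj1 (bInjective_bSurjective Hsr) Hsi _ Hk) as (k0 & Hk0 & Hsk0).
  destruct (elab_eatt_mid G2 pre post _ E2) as [El2 Ea2]. simpl in El2, Ea2.
  destruct (elab G k0) as [x0|] eqn:Ex0.
  2:{ apply Hlab in Ex0; auto. rewrite Hsk0, El2 in Ex0. discriminate. }
  assert (Htx := Hteq k0 x0 (HTimes M) Hk0 Ex0 ltac:(rewrite Hsk0; auto)).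
  inversion Htx as [| |M0 M' HM0 Hx0eq HM']. subst x0 M'.
  assert (Ha0 := Hatt k0 Hk0). rewrite Hsk0, Ea2 in Ha0.
  destruct (eatt G k0) as [|u0 [|v0 [|w a0]]] eqn:Ea0; simpl in Ha0; try discriminate.
  injection Ha0 as Hu Hv0.
  assert (HwM0 : wf_graph M0).
  { apply wf_graph_iff in HwG as (_ & _ & Hes). rewrite Forall_edges_iff in Hes.
    destruct (Hes k0 Hk0) as (_ & _ & Hlb). rewrite Ex0 in Hlb.
    apply (proj2 (proj1 (wf_type_times M0) (proj1 Hlb))). }
  destruct (reversal_graph_giso M0 M T HM0 HwM0 HM) as (T0 & HM0T0 & HT0).
  destruct (nth_error_split (A := edge) _ _ (nth_error_edges G k0 Hk0))
    as (pre0 & post0 & E0 & <-).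
  rewrite Ex0, Ea0 in E0. exists pre0, post0, M0, T0, u0, v0.
  split; [exact E0|]. split; [exact Hsk0|]. auto.
Qed.

Lemma giso_update_edge G1 G3 (pre0 post0 pre post : list edge) x0 y0 x y :
  gedges G = pre0 ++ x0 :: post0 -> gedges G2 = pre ++ x :: post ->
  gnv G1 = gnv G -> gext G1 = gext G -> gedges G1 = pre0 ++ y0 :: post0 ->
  gnv G3 = gnv G2 -> gext G3 = gext G2 -> gedges G3 = pre ++ y :: post ->
  s (length pre0) = length pre ->
  (fst y0 = None <-> fst y = None) -> snd y = map f (snd y0) ->
  (forall a b, fst y0 = Some a -> fst y = Some b -> teq a b) ->
  giso G1 G3.
Proof.
  intros E0 E2 Hv1 Hx1 E1 Hv3 Hx3 E3 Hs0 Hylab Hyatt Hyteq.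
  assert (Hlen1 : length (gedges G1) = length (gedges G)).
  { rewrite E1, E0, !length_app. reflexivity. }
  assert (Hedge : forall i, i < length (gedges G) ->
    (elab G1 i = None <-> elab G3 (s i) = None) /\ eatt G3 (s i) = map f (eatt G1 i) /\
    (forall a b, elab G1 i = Some a -> elab G3 (s i) = Some b -> teq a b)).
  { intros i Hi. destruct (Nat.eq_dec i (length pre0)) as [->|Hne].
    - rewrite Hs0.
      destruct (elab_eatt_mid G3 pre post _ E3) as [-> ->].
      destruct (elab_eatt_mid G1 pre0 post0 _ E1) as [-> ->]. auto.
    - assert (Hsne : s i <> length pre).
      { intros Hc. apply Hne, Hsi; auto. rewrite E0, length_app. simpl. lia. congruence. }
      destruct (elab_eatt_other G2 G3 pre post _ _ (s i) E2 E3 Hsne) as [-> ->].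
      destruct (elab_eatt_other G G1 pre0 post0 _ _ i E0 E1 Hne) as [-> ->].
      split; [|split]; eauto. }
  apply (giso_intro G1 G3 f s); rewrite ?Hlen1, ?Hv1; auto.
  - congruence.
  - rewrite E3, <- Hl, E2, !length_app. reflexivity.
  - intros i Hi. apply (proj1 (proj2 (Hedge i Hi))).
  - congruence.
  - intros i Hi. apply (proj1 (Hedge i Hi)).
  - intros i a b Hi. apply (proj2 (proj2 (Hedge i Hi))).
Qed.

End EdgeIsomorphism.

Lemma giso_flip_transport G G2 G3 :
  giso G G2 -> wf_graph G -> flip_graph G2 G3 -> exists G1, flip_graph G G1 /\ giso G1 G3.
Proof.
  intros Hiso HwG (Hv3 & Hx3 & pre & x & x' & post & E2 & E3 & M & T & u & v & -> & HM & ->).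
  destruct Hiso as [G G2 f s Hv Hl Hfr Hfi Hsr Hsi Hatt Hext Hlab Hteq].
  destruct (giso_reversal_edge_preimage G G2 f s Hv Hl Hsr Hsi Hatt Hlab Hteq
              pre post M T u v HwG E2 HM)
    as (pre0 & post0 & M0 & T0 & u0 & v0 & E0 & Hs0 & HM0 & HT0 & Hu & Hv0).
  exists (mkGraph (gnv G) (pre0 ++ (Some T0, [v0; u0]) :: post0) (gext G)). split.
  - repeat split. exists pre0, (Some (HTimes M0), [u0; v0]), (Some T0, [v0; u0]), post0.
    repeat split; auto. exists M0, T0, u0, v0. auto.
  - apply (giso_update_edge G G2 f s Hv Hl Hfr Hfi Hsr Hsi Hatt Hext Hlab Hteq _ G3
             pre0 post0 pre post _ (Some T0, [v0; u0]) _ (Some T, [v; u]) E0 E2); simpl; auto.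
    + split; discriminate.
    + congruence.
    + intros a b [= <-] [= <-]. exact HT0.
Qed.

(** * Invertibility of (×→) on reversal edges *)

(* The generated [hl_deriv_ind] has no induction hypotheses for the premises of (÷→) and (×→),
   which sit under existential quantifiers. *)
Lemma hl_deriv_nested_ind (P : hgraph -> HLtype -> Prop)
  (Hax : forall x a, wf_seq (handle x a) (HPrim x a) -> P (handle x a) (HPrim x a))
  (Hdivl : forall (H : hgraph) (A N : HLtype) (D : hgraph) (e d0 : nat) (Hs : nat -> hgraph),
     hl_deriv H A -> P H A ->
     e < length (gedges H) -> elab H e = Some N ->
     d0 < length (gedges D) -> elab D d0 = None ->
     (forall i, i < length (gedges D) -> i <> d0 ->
        exists T, elab D i = Some T /\ hl_deriv (Hs i) T /\ P (Hs i) T) ->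
     let D' := subst (relabel D d0 (Some (HDiv N D)))
                     (fun i => if Nat.eqb i d0 then None else Some (Hs i)) in
     wf_seq (repl H e D') A -> P (repl H e D') A)
  (Hdivr : forall (F D : hgraph) (N : HLtype) (d0 : nat),
     d0 < length (gedges D) -> elab D d0 = None ->
     hl_deriv (repl D d0 F) N -> P (repl D d0 F) N ->
     wf_seq F (HDiv N D) -> P F (HDiv N D))
  (Htimesl : forall (G F : hgraph) (A : HLtype) (e : nat),
     e < length (gedges G) -> elab G e = Some (HTimes F) ->
     hl_deriv (repl G e F) A -> P (repl G e F) A ->
     wf_seq G A -> P G A)
  (Htimesr : forall (M : hgraph) (Hs : nat -> hgraph),
     (forall i, i < length (gedges M) ->
        exists T, elab M i = Some T /\ hl_deriv (Hs i) T /\ P (Hs i) T) ->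
     wf_seq (subst M (fun i => Some (Hs i))) (HTimes M) ->
     P (subst M (fun i => Some (Hs i))) (HTimes M))
  (Hiso : forall (G G' : hgraph) (A A' : HLtype),
     hl_deriv G A -> P G A -> giso G G' -> teq A A' -> wf_seq G' A' -> P G' A') :
  forall G A, hl_deriv G A -> P G A.
Proof.
  fix IH 3. intros G A d. destruct d as [| ? ? ? ? ? ? ? dH ? ? ? ? Hprem | | | ? ? Hprem |].
  - apply Hax; auto.
  - apply Hdivl; auto. intros i Hi Hne.
    destruct (Hprem i Hi Hne) as (T & HT & dT). exists T. auto.
  - eapply Hdivr; eauto.
  - eapply Htimesl; eauto.
  - apply Htimesr; auto. intros i Hi.
    destruct (Hprem i Hi) as (T & HT & dT). exists T. auto.
  - eapply Hiso; eauto.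
Qed.

Definition flip_admissible (G : hgraph) (A : HLtype) : Prop :=
  forall G', flip_graph G G' -> hl_deriv G' A.

Lemma flip_admissible_ax x a : flip_admissible (handle x a) (HPrim x a).
Proof.
  intros G' (_ & _ & Hst). simpl in Hst.
  apply flip_step_cons_inv in Hst as [(x' & (M & T & u & v & Heq & _) & _) | (l' & Hst & _)].
  - discriminate.
  - contradiction (flip_step_nil _ Hst).
Qed.

Lemma div_l_minor_flip D d0 N Hs H1 :
  (forall i, i < length (gedges D) -> i <> d0 ->
     exists T, elab D i = Some T /\ hl_deriv (Hs i) T /\ flip_admissible (Hs i) T) ->
  flip_graph (subst (relabel D d0 (Some (HDiv N D)))
                    (fun i => if Nat.eqb i d0 then None else Some (Hs i))) H1 ->
  exists Hs', (forall i, i < length (gedges D) -> i <> d0 ->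
                 exists T, elab D i = Some T /\ hl_deriv (Hs' i) T) /\
    H1 = subst (relabel D d0 (Some (HDiv N D)))
               (fun i => if Nat.eqb i d0 then None else Some (Hs' i)).
Proof.
  intros Hprem HFG.
  apply subst_flip_cases in HFG as
    [(pre & x & x' & post & E & Hfl & Hn & _) | (j & H & H' & Hj & Hrs & HFG & ->)].
  - (* The only edge left in place is d0, and it is labelled by a ÷-type. *)
    exfalso. destruct (Nat.eqb_spec (length pre) d0) as [Hd|]; [|discriminate].
    pose proof (nth_error_relab_edges d0 (Some (HDiv N D)) (gedges D)) as Hr.
    simpl in E. unfold edge in *. rewrite E, <- Hd, nth_error_app2, Nat.sub_diag in Hr by lia.
    destruct (nth_error (gedges D) (length pre)); simpl in Hr; [|discriminate].
    injection Hr as ->. destruct Hfl as (M & T & u & v & Heq & _). discriminate.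
  - simpl in Hj. rewrite length_relab_edges in Hj.
    destruct (Nat.eqb_spec j d0) as [|Hjd]; [discriminate|]. injection Hrs as <-.
    destruct (Hprem j Hj Hjd) as (T & ET & _ & IH).
    exists (fun i => if Nat.eqb i j then H' else Hs i). split.
    + intros i Hi Hid. destruct (Nat.eqb_spec i j).
      * subst. eauto.
      * destruct (Hprem i Hi Hid) as (T' & ? & ? & _). eauto.
    + apply subst_ext. intros k. unfold set_repl.
      destruct (Nat.eqb_spec k j), (Nat.eqb_spec k d0); subst; auto; lia.
Qed.

Lemma flip_admissible_div_l H A N D e d0 Hs :
  hl_deriv H A -> flip_admissible H A ->
  e < length (gedges H) -> elab H e = Some N ->
  d0 < length (gedges D) -> elab D d0 = None ->
  (forall i, i < length (gedges D) -> i <> d0 ->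
     exists T, elab D i = Some T /\ hl_deriv (Hs i) T /\ flip_admissible (Hs i) T) ->
  let D' := subst (relabel D d0 (Some (HDiv N D)))
                  (fun i => if Nat.eqb i d0 then None else Some (Hs i)) in
  wf_seq (repl H e D') A -> flip_admissible (repl H e D') A.
Proof.
  intros dH IH He HeN Hd0 Hd0N Hprem D' Hwf G' HFG.
  assert (Hwf' := wf_seq_flip _ _ _ HFG Hwf).
  assert (Hprem' : forall i, i < length (gedges D) -> i <> d0 ->
            exists T, elab D i = Some T /\ hl_deriv (Hs i) T).
  { intros i Hi Hid. destruct (Hprem i Hi Hid) as (T & ? & ? & _). eauto. }
  unfold repl in HFG. apply subst_flip_cases in HFG as
    [(pre & x & x' & post & E & Hfl & Hn & ->) | (j & H0 & H1 & Hj & Hrs & HFG & ->)].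
  - set (H' := mkGraph (gnv H) (pre ++ x' :: post) (gext H)).
    assert (Hne : e <> length pre).
    { intros ->. unfold single in Hn. rewrite Nat.eqb_refl in Hn. discriminate. }
    destruct (elab_eatt_other H H' pre post x x' e E eq_refl Hne) as [HeN' _].
    assert (He' : e < length (gedges H')).
    { simpl. rewrite E, length_app in He. rewrite length_app. exact He. }
    assert (HFGH : flip_graph H H') by (repeat split; exists pre, x, x', post; auto).
    exact (hl_div_l H' A N D e d0 Hs (IH H' HFGH) He' (eq_trans HeN' HeN) Hd0 Hd0N Hprem' Hwf').
  - unfold single in Hrs. destruct (Nat.eqb_spec j e) as [->|]; [|discriminate].
    injection Hrs as <-. apply div_l_minor_flip in HFG as (Hs' & Hprem'' & ->); auto.
    rewrite (subst_ext _ _ _ (set_repl_single e D' _)) in Hwf' |- *.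
    exact (hl_div_l H A N D e d0 Hs' dH He HeN Hd0 Hd0N Hprem'' Hwf').
Qed.

Lemma flip_admissible_div_r F D N d0 :
  d0 < length (gedges D) -> elab D d0 = None ->
  flip_admissible (repl D d0 F) N -> wf_seq F (HDiv N D) -> flip_admissible F (HDiv N D).
Proof.
  intros Hd0 Hd0N IH Hwf G' HFG.
  apply hl_div_r with d0; auto; [|eapply wf_seq_flip; eauto].
  apply IH. unfold repl. rewrite <- (subst_ext _ _ _ (set_repl_single d0 F G')).
  apply subst_flip_inserted with F; auto. apply set_repl_eq.
Qed.

Lemma flip_admissible_times_l G F A e :
  e < length (gedges G) -> elab G e = Some (HTimes F) ->
  hl_deriv (repl G e F) A -> flip_admissible (repl G e F) A -> wf_seq G A ->
  flip_admissible G A.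
Proof.
  intros He HeF dP IH Hwf G' HFG.
  assert (Hwf' := wf_seq_flip _ _ _ HFG Hwf).
  destruct HFG as (Hv & Hx & pre & x & x' & post & E & E' & Hfl).
  assert (HG' : G' = mkGraph (gnv G) (pre ++ x' :: post) (gext G)).
  { destruct G'. simpl in *. congruence. }
  destruct (Nat.eq_dec e (length pre)) as [->|Hne].
  - (* The rule unfolds the flipped edge itself: its premise is the flipped graph. *)
    destruct (elab_eatt_mid G pre post x E) as [Hl _]. rewrite HeF in Hl.
    destruct Hfl as (M & T & u & v & -> & HM & ->). simpl in Hl. injection Hl as <-.
    replace G' with (repl G (length pre) F); [exact dP|].
    rewrite (repl_reversal_graph G pre post F T u v E HM), HG'. reflexivity.
  - destruct (elab_eatt_other G G' pre post x x' e E E' Hne) as [HeF' _].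
    apply hl_times_l with F e; auto.
    + rewrite E'. rewrite E in He. rewrite !length_app in *. exact He.
    + congruence.
    + apply IH. rewrite HG'. unfold repl.
      apply subst_flip_kept with x; auto.
      unfold single. apply Nat.eqb_neq in Hne. rewrite Nat.eqb_sym, Hne. reflexivity.
Qed.

Lemma flip_admissible_times_r M Hs :
  (forall i, i < length (gedges M) ->
     exists T, elab M i = Some T /\ hl_deriv (Hs i) T /\ flip_admissible (Hs i) T) ->
  wf_seq (subst M (fun i => Some (Hs i))) (HTimes M) ->
  flip_admissible (subst M (fun i => Some (Hs i))) (HTimes M).
Proof.
  intros Hprem Hwf G' HFG.
  assert (Hwf' := wf_seq_flip _ _ _ HFG Hwf).
  apply subst_flip_cases in HFG as
    [(pre & x & x' & post & _ & _ & Hn & _) | (j & H & H' & Hj & Hrs & HFG & ->)];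
    [discriminate|].
  injection Hrs as <-. destruct (Hprem j Hj) as (T & ET & _ & IH).
  set (Hs' := fun i => if Nat.eqb i j then H' else Hs i).
  assert (HG' : subst M (set_repl (fun i => Some (Hs i)) j H') =
                subst M (fun i => Some (Hs' i))).
  { apply subst_ext. intros k. unfold set_repl, Hs'. destruct (Nat.eqb k j); reflexivity. }
  rewrite HG' in *. apply hl_times_r; auto.
  intros i Hi. unfold Hs'. destruct (Nat.eqb_spec i j).
  - subst. eauto.
  - destruct (Hprem i Hi) as (T' & ? & ? & _). eauto.
Qed.

Lemma flip_admissible_iso G G' A A' :
  hl_deriv G A -> flip_admissible G A -> giso G G' -> teq A A' -> wf_seq G' A' ->
  flip_admissible G' A'.
Proof.
  intros dG IH Hiso Hteq Hwf G3 HFG.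
  destruct (giso_flip_transport G G' G3 Hiso (proj1 (hl_deriv_wf _ _ dG)) HFG)
    as (G1 & HFG1 & Hiso1).
  apply hl_iso with G1 A; auto. eapply wf_seq_flip; eauto.
Qed.

Lemma hl_deriv_flip G A : hl_deriv G A -> flip_admissible G A.
Proof.
  revert G A. apply hl_deriv_nested_ind.
  - intros. apply flip_admissible_ax.
  - exact flip_admissible_div_l.
  - intros. eapply flip_admissible_div_r; eauto.
  - exact flip_admissible_times_l.
  - exact flip_admissible_times_r.
  - exact flip_admissible_iso.
Qed.

Lemma hl_deriv_flip_iff G G' A :
  flip_graph G G' -> wf_seq G A -> (hl_deriv G A <-> hl_deriv G' A).
Proof.
  intros HFG Hwf. split; [intros d; exact (hl_deriv_flip G A d G' HFG)|].
  intros d.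
  destruct HFG as (Hv & Hx & pre & x & x' & post & E & E' & M & T & u & v & -> & HM & ->).
  apply hl_times_l with M (length pre); auto.
  - rewrite E, length_app. simpl. lia.
  - destruct (elab_eatt_mid G pre post _ E) as [-> _]. reflexivity.
  - rewrite (repl_reversal_graph G pre post M T u v E HM).
    destruct G'. simpl in *. subst. exact d.
Qed.

(** * The translation *)

Definition wf_type2 (T : HLtype) : Prop := wf_type T /\ arity T = 2.

Definition wf_label2 (l : option HLtype) : Prop :=
  match l with None => True | Some T => wf_type2 T end.

Lemma edge_ok_pair n a b l :
  a < n -> b < n -> a <> b -> wf_label2 l -> edge_ok wf_type n (l, [a; b]).
Proof.
  intros Ha Hb Hab Hl. split; [|split; [apply NoDup_pair, Hab|]].
  - intros w [<-|[<-|[]]]; auto.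
  - destruct l as [T|]; [destruct Hl|]; simpl; auto.
Qed.

Lemma wf_graph_string2 l1 l2 :
  wf_label2 l1 -> wf_label2 l2 -> wf_graph (mkGraph 3 [(l1, [0; 1]); (l2, [1; 2])] [0; 2]).
Proof.
  intros H1 H2. apply wf_graph_iff. simpl.
  split; [intros v [<-|[<-|[]]]; lia|split; [apply NoDup_pair; lia|]].
  repeat (apply Forall_cons; [apply edge_ok_pair; auto|]). apply Forall_nil.
Qed.

Lemma wf_type2_trR A : wf_type2 (trR A).
Proof.
  induction A as [x|B IHB A IHA|A IHA B IHB|A IHA B IHB|A IHA]; split; try reflexivity.
  - apply wf_type_div. split; [apply IHA|split; [reflexivity|split; [apply IHA|]]].
    apply wf_graph_string2; simpl; auto.
  - apply wf_type_div. split; [apply IHA|split; [reflexivity|split; [apply IHA|]]].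
    apply wf_graph_string2; simpl; auto.
  - apply wf_type_times. split; [reflexivity|apply wf_graph_string2; auto].
  - apply wf_type_times. split; [reflexivity|]. apply wf_graph_iff. simpl.
    split; [intros v [<-|[<-|[]]]; lia|split; [apply NoDup_pair; lia|]].
    apply Forall_cons; [apply edge_ok_pair; auto|apply Forall_nil].
Qed.

Lemma gs_edges_app P : forall k R, gs_edges k (P ++ R) = gs_edges k P ++ gs_edges (k + length P) R.
Proof.
  induction P as [|[T d] P IH]; intros k R; simpl.
  - rewrite Nat.add_0_r. reflexivity.
  - rewrite IH, Nat.add_succ_r. reflexivity.
Qed.

Lemma gs_edges_wf l : forall k n,
  (forall p, In p l -> wf_type2 (fst p)) -> k + length l < n ->
  Forall (edge_ok wf_type n) (gs_edges k l) /\ filter is_dollar (gs_edges k l) = [].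
Proof.
  induction l as [|[T d] l IH]; intros k n Hl Hn; simpl in *; auto.
  destruct (IH (S k) n) as [Hok Hd]; auto; try lia. split; [|exact Hd].
  constructor; auto.
  assert (HT : wf_label2 (Some T)) by (apply (Hl (T, d)); auto).
  destruct d; apply edge_ok_pair; auto; lia.
Qed.

Lemma gen_string_wf_seq l T :
  l <> [] -> (forall p, In p l -> wf_type2 (fst p)) -> wf_type2 T -> wf_seq (gen_string l) T.
Proof.
  intros Hne Hl [WT AT]. destruct (gs_edges_wf l 0 (S (length l)) Hl ltac:(lia)) as [Hok Hd].
  split; [|split; [|split]]; auto.
  - apply wf_graph_iff. simpl. split; [intros v [<-|[<-|[]]]; lia|split; auto].
    apply NoDup_pair. destruct l; simpl; [congruence|lia].
  - unfold count_dollar. simpl. rewrite Hd. reflexivity.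
Qed.

Lemma flip_graph_gen_string P B R :
  flip_graph (gen_string (P ++ (trR (LRev B), false) :: R)) (gen_string (P ++ (trR B, true) :: R)).
Proof.
  unfold gen_string. simpl. rewrite !length_app, !gs_edges_app. simpl.
  repeat split. eexists _, _, _, _. split; [reflexivity|split; [reflexivity|]].
  eexists _, _, _, _. split; [reflexivity|split; [|reflexivity]].
  split; [reflexivity|]. exists 1, 0. repeat split; auto.
Qed.

Lemma hl_deriv_gen_string_bracket_iff T r : wf_type2 T -> forall P,
  (forall q, In q P -> wf_type2 (fst q)) ->
  (hl_deriv (gen_string (P ++ map (fun p => (trR (bracket (fst p) (snd p)), false)) r)) T <->
   hl_deriv (gen_string (P ++ map (fun p => (trR (fst p), snd p)) r)) T).
Proof.
  intros HT. induction r as [|[B d] r IH]; intros P HP; simpl; [reflexivity|].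
  assert (HP' : forall q, In q (P ++ [(trR B, d)]) -> wf_type2 (fst q)).
  { intros q Hq. apply in_app_or in Hq as [Hq|[<-|[]]]; auto. apply wf_type2_trR. }
  specialize (IH _ HP'). rewrite <- !app_assoc in IH. simpl in IH. rewrite <- IH.
  destruct d; simpl; [|reflexivity].
  apply hl_deriv_flip_iff; [apply flip_graph_gen_string|].
  apply gen_string_wf_seq; auto.
  - destruct P; discriminate.
  - intros q Hq. apply in_app_or in Hq as [Hq|[<-|Hq]]; auto; [apply (wf_type2_trR (LRev B))|].
    apply in_map_iff in Hq as (p & <- & _). apply wf_type2_trR.
Qed.

Theorem lemma2 (Gamma : list ltype) (C : ltype) :
  Gamma <> nil ->
  in_trR' Gamma C (trR_ant Gamma) (trR C) /\
  (forall (H : hgraph) (T : HLtype), in_trR' Gamma C H T ->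
     (hl_deriv (trR_ant Gamma) (trR C) <-> hl_deriv H T)).
Proof.
  intros Hne. split.
  - exists (map (fun A => (A, false)) Gamma). split; [|split].
    + rewrite map_map. apply map_id.
    + unfold trR_ant. rewrite map_map. apply giso_refl.
    + apply teq_refl.
  - intros H T (l & <- & Hiso & Hteq).
    unfold trR_ant. rewrite map_map.
    rewrite (hl_deriv_gen_string_bracket_iff _ l (wf_type2_trR C) []) by (intros q []).
    apply hl_deriv_iso_iff; auto.
    apply gen_string_wf_seq.
    + destruct l; [contradiction|discriminate].
    + intros q Hq. apply in_map_iff in Hq as (p & <- & _). apply wf_type2_trR.
    + apply wf_type2_trR.
Qed.
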